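(* Let $p$ be a prime, $s\geq 2$, and $\lambda_i\in\{0,1,\dots,p-1\}$ for $i\in\{0,\dots,s-1\}$. Then $$\phi_s\Big(\sum_{i=0}^{s-1}\lambda_ip^i\Big)=\gamma_s\Big(\Phi_{s-1}\Big(\sum_{i=0}^{s-1}\tau_s(\lambda_ip^i)\Big)\Big),$$ where the inner sum is computed in $\mathbb{Z}_{p^{s-1}}^p$.
   Context: For $r\geq1$ and $u\in\mathbb{Z}_{p^r}$ with $p$-ary expansion $u=\sum_{i=0}^{r-1}u_ip^i$, $\phi_r(u)=(u_{r-1},\dots,u_{r-1})+(u_0,\dots,u_{r-2})Y_{r-1}\in\mathbb{Z}_p^{p^{r-1}}$, where $Y_1=(0\ 1\ \cdots\ p-1)$ and $Y_k$ is the $k\times p^k$ matrix with first $k-1$ rows $(Y_{k-1}\ \cdots\ Y_{k-1})$ ($p$ copies) and last row $(0,\dots,0,1,\dots,1,\dots,p-1,\dots,p-1)$ (blocks of length $p^{k-1}$); $\phi_1=\mathrm{id}$; $\Phi_r:\mathbb{Z}_{p^r}^n\to\mathbb{Z}_p^{np^{r-1}}$ applies $\phi_r$ coordinatewise and concatenates. $\gamma_s$ is the coordinate permutation of $\mathbb{Z}_p^{p^{s-1}}$ given by $\gamma_s(\mathbf{x})_{j+ip+1}=\mathbf{x}_{jp^{s-2}+i+1}$ for $j\in\{0,\dots,p-1\}$, $i\in\{0,\dots,p^{s-2}-1\}$. The map $\tau_s:\mathbb{Z}_{p^s}\to\mathbb{Z}_{p^{s-1}}^p$ is $\tau_s(u)=\Phi_{s-1}^{-1}(\gamma_s^{-1}(\phi_s(u)))$.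 *)

From HB Require Import structures.
From mathcomp Require Import all_boot all_order all_algebra.
Unset Printing Implicit Defensive.
Import GRing.Theory.
Local Open Scope ring_scope.

Definition digit (p i u : nat) : nat := ((u %/ p ^ i) %% p)%N.

(* Entries of the matrix Y_k, as natural numbers (row i, column j, 0-indexed):
   Y_1 = (0 1 ... p-1); Y_{k} has first k-1 rows (Y_{k-1} ... Y_{k-1}) (p copies)
   and last row (0..0,1..1,...,p-1..p-1) with blocks of length p^{k-1}.
   (Y_0 is the empty 0 x 1 matrix.) *)
Fixpoint Ynat (p k i j : nat) : nat :=
  match k with
  | 0 => 0%N
  | k'.+1 => if (i < k')%N then Ynat p k' i (j %% p ^ k') else (j %/ p ^ k')%N
  end.

Definition Ymx (p k : nat) : 'M['Z_p]_(k, p ^ k) :=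
  \matrix_(i < k, j < p ^ k) (Ynat p k i j)%:R.

Definition phi (p r : nat) (u : 'Z_(p ^ r)) : 'rV['Z_p]_(p ^ (r - 1)) :=
  const_mx (digit p (r - 1) u)%:R
  + (\row_(i < r - 1) (digit p i u)%:R) *m Ymx p (r - 1).

(* k-th (0-indexed) coordinate of a row vector, 0 if out of range *)
Definition entry {T : zmodType} {m : nat} (x : 'rV[T]_m) (k : nat) : T :=
  if @insub nat (fun k => (k < m)%N) 'I_m k is Some i then x 0 i else 0.

(* Phi_r : Z_{p^r}^n -> Z_p^{n p^{r-1}}: phi_r coordinatewise, concatenated *)
Definition Phi (p r n : nat) (v : 'rV['Z_(p ^ r)]_n) : 'rV['Z_p]_(n * p ^ (r - 1)) :=
  \row_(k < n * p ^ (r - 1))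
     entry (phi p r (entry v (k %/ p ^ (r - 1))%N)) (k %% p ^ (r - 1))%N.

(* gamma_s : coordinate permutation of Z_p^{p^{s-1}} (the domain is written
   Z_p^{p * p^{s-2}}, the output length of Phi_{s-1} on Z_{p^{s-1}}^p):
   gamma_s(x)_{j + i p} = x_{j p^{s-2} + i} (0-indexed), j < p, i < p^{s-2}. *)
Definition gamma (p s : nat) (x : 'rV['Z_p]_(p * p ^ (s - 1 - 1))) : 'rV['Z_p]_(p ^ (s - 1)) :=
  \row_(k < p ^ (s - 1)) entry x ((k %% p) * p ^ (s - 2) + k %/ p)%N.

(* tau_s(u) = Phi_{s-1}^{-1}(gamma_s^{-1}(phi_s(u))): the (unique, Phi_{s-1} and
   gamma_s being injective) v in Z_{p^{s-1}}^p with gamma_s(Phi_{s-1}(v)) = phi_s(u);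
   0 if no such v exists. *)
Definition tau (p s : nat) (u : 'Z_(p ^ s)) : 'rV['Z_(p ^ (s - 1))]_p :=
  odflt 0 [pick v : 'rV['Z_(p ^ (s - 1))]_p | gamma p s (Phi p (s - 1) p v) == phi p s u].

From mathcomp Require Import all_boot all_order all_algebra zify.
Import GRing.Theory.
Local Open Scope ring_scope.

(* tau_s has the closed form tau_s(n)_a = n div p + (n mod p) a p^(s-2) in
   Z_(p^(s-1)).  Indeed the entry of gamma_s(Phi_(s-1)(v)) at
   index a + p j is the entry of phi_(s-1)(v_a) at j, and the entry of phi_s(n)
   there is n_(s-1) + n_0 a + sum_(i < s-2) n_(i+1) j_i, which is the entry of
   phi_(s-1) at j of the number with digits n_1, ..., n_(s-2), n_(s-1) + n_0 a (mod p).
   As gamma_s o Phi_(s-1) is injective, this closed form is tau_s.  It is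
   additive as long as the second summand is a multiple of p, so it maps
   lambda_0 + sum_(i > 0) lambda_i p^i to the sum of the tau_s(lambda_i p^i). *)

Section Digits.
Local Open Scope nat_scope.
Variable p : nat.
Hypothesis p_gt1 : 1 < p.
Let p_gt0 : 0 < p. Proof. exact: ltnW. Qed.
Let pX_gt0 k : 0 < p ^ k. Proof. by rewrite expn_gt0 p_gt0. Qed.

Lemma digit_lt i u : digit p i u < p.
Proof. by rewrite /digit ltn_pmod. Qed.

Lemma digitn0 i : digit p i 0 = 0.
Proof. by rewrite /digit div0n mod0n. Qed.

Lemma digit0n u : digit p 0 u = u %% p.
Proof. by rewrite /digit expn0 divn1. Qed.

Lemma digitS i u : digit p i.+1 u = digit p i (u %/ p).
Proof. by rewrite /digit -divnMA -expnS. Qed.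

Lemma digitDMX_lt i m x y : i < m -> digit p i (x + y * p ^ m) = digit p i x.
Proof.
move=> lt_im; have -> : y * p ^ m = y * p ^ (m - i.+1) * p * p ^ i.
  by rewrite -!mulnA -expnS -expnD subnK.
by rewrite /digit divnDMl // addnC modnMDl.
Qed.

Lemma digitDMX m x y : digit p m (x + y * p ^ m) = (digit p m x + y) %% p.
Proof. by rewrite /digit divnDMl // modnDml. Qed.

Lemma digit_mod i m x : i < m -> digit p i (x %% p ^ m) = digit p i x.
Proof. by move=> lt_im; rewrite {2}(divn_eq x (p ^ m)) addnC digitDMX_lt. Qed.

Lemma digit_expn i j : digit p i (p ^ j) = (i == j).
Proof.
case: ltngtP => [lt_ij | lt_ji | ->].
- by rewrite -(add0n (p ^ j)) -(mul1n (p ^ j)) digitDMX_lt // /digit div0n mod0n.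
- by rewrite /digit divn_small ?mod0n ?ltn_exp2l.
- by rewrite /digit divnn pX_gt0 modn_small.
Qed.

Lemma sum_digit_expn m x i : i < m ->
  \sum_(k < m) digit p k x * digit p k (p ^ i) = digit p i x.
Proof.
move=> lt_im; under eq_bigr do rewrite digit_expn mulnbr.
by rewrite -big_mkcond (big_pred1 (Ordinal lt_im)).
Qed.

Lemma ltn_addMX a j m : a < p -> j < p ^ m -> a + p * j < p ^ m.+1.
Proof.
move=> lt_a lt_j; rewrite expnS; apply: (leq_trans (n := p * j.+1)).
  by rewrite mulnS ltn_add2r.
by rewrite leq_mul2l lt_j orbT.
Qed.

Lemma eq_digits m x y : x < p ^ m -> y < p ^ m ->
  (forall i, i < m -> digit p i x = digit p i y) -> x = y.
Proof.
elim: m x y => [|m IH] x y.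
  by rewrite expn0 !ltnS !leqn0 => /eqP -> /eqP ->.
move=> ltx lty eq_xy; rewrite (divn_eq x p) (divn_eq y p) -!digit0n eq_xy //.
congr (_ * _ + _); apply: IH; rewrite ?ltn_divLR -?expnSr // => i lt_im.
by rewrite -!digitS eq_xy.
Qed.

Lemma Ynat_digit k i j : i < k -> j < p ^ k -> Ynat p k i j = digit p i j.
Proof.
elim: k i j => [|k IH] i j // lt_ik lt_j /=.
case: ltnP => [lt_ik' | le_ki]; first by rewrite IH ?ltn_pmod ?digit_mod.
have -> : i = k by apply/eqP; rewrite eqn_leq -ltnS lt_ik le_ki.
by rewrite /digit modn_small // ltn_divLR // -expnS.
Qed.

End Digits.

Lemma entryE {T : zmodType} {m} (x : 'rV[T]_m) {k} (lt_km : (k < m)%N) :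
  entry x k = x 0 (Ordinal lt_km).
Proof. by rewrite /entry insubT. Qed.

Lemma entry_ord {T : zmodType} {m} (x : 'rV[T]_m) (k : 'I_m) : entry x k = x 0 k.
Proof. by case: k => k lt_km; rewrite entryE. Qed.

Section PhiGamma.
Variable p : nat.
Hypothesis p_gt1 : (1 < p)%N.
Let p_gt0 : (0 < p)%N. Proof. exact: ltnW. Qed.
Let pX_gt0 k : (0 < p ^ k)%N. Proof. by rewrite expn_gt0 p_gt0. Qed.
Let pX_gt1 {k} : (0 < k)%N -> (1 < p ^ k)%N.
Proof. by move=> k_gt0; rewrite -(expn0 p) ltn_exp2l. Qed.

Lemma entry_phi r (u : 'Z_(p ^ r)) j : (j < p ^ (r - 1))%N ->
  entry (phi p r u) j =
    (digit p (r - 1) u + \sum_(i < r - 1) digit p i u * digit p i j)%N%:R.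
Proof.
move=> lt_j; rewrite (entryE (phi p r u) lt_j) /phi !mxE natrD natr_sum.
by congr (_ + _); apply: eq_bigr => i _; rewrite !mxE Ynat_digit // natrM.
Qed.

Lemma phi_inj r (x y : 'Z_(p ^ r)) : (0 < r)%N ->
  (forall j, (j < p ^ (r - 1))%N -> entry (phi p r x) j = entry (phi p r y) j) -> x = y.
Proof.
move=> r_gt0 eq_xy.
have pr_gt1 := pX_gt1 r_gt0.
have eq_Zp d e : (d < p)%N -> (e < p)%N -> (d%:R : 'Z_p) = e%:R -> d = e.
  by move=> lt_d lt_e /(congr1 (@nat_of_ord _)); rewrite !val_Zp_nat // !modn_small.
have top : digit p (r - 1) x = digit p (r - 1) y.
  have := eq_xy 0%N (pX_gt0 _); rewrite !entry_phi //.
  under eq_bigr do rewrite digitn0 muln0.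
  under [in RHS]eq_bigr do rewrite digitn0 muln0.
  by rewrite !big1 // !addn0 => /eq_Zp; apply; apply: digit_lt.
have ltZ (z : 'Z_(p ^ r)) : (z < p ^ r)%N by rewrite -[X in (_ < X)%N](Zp_cast pr_gt1).
apply: val_inj; apply: (@eq_digits p p_gt1 r); [exact: ltZ | exact: ltZ |].
move=> i lt_ir; have [lt_i | le_i] := ltnP i (r - 1); last by have -> : i = (r - 1)%N by lia.
have lt_pi : (p ^ i < p ^ (r - 1))%N by rewrite ltn_exp2l.
have := eq_xy _ lt_pi; rewrite !entry_phi // !sum_digit_expn // natrD [in RHS]natrD top => /addrI.
by move=> /eq_Zp; apply; apply: digit_lt.
Qed.

Lemma entry_formula_shift r n a j : (a < p)%N ->
  let w := ((n %/ p + n %% p * a * p ^ r) %% p ^ r.+1)%N in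
  let v := (n %% p ^ r.+2)%N in
  (digit p r w + \sum_(i < r) digit p i w * digit p i j)%N%:R
    = (digit p r.+1 v + \sum_(i < r.+1) digit p i v * digit p i (a + p * j))%N%:R :> 'Z_p.
Proof.
move=> lt_a w v.
have dv i : (i < r.+2)%N -> digit p i v = digit p i n by exact: digit_mod.
have dw i : (i < r)%N -> digit p i w = digit p i.+1 n.
  by move=> lt_ir; rewrite digit_mod ?digitDMX_lt -?digitS // ltnW.
have dw_top : digit p r w = ((digit p r.+1 n + n %% p * a) %% p)%N.
  by rewrite digit_mod // (digitDMX _ p_gt1) -digitS.
have dk0 : digit p 0 (a + p * j) = a by rewrite digit0n addnC mulnC modnMDl modn_small.
have dkS i : digit p i.+1 (a + p * j) = digit p i j.
  by rewrite digitS addnC mulnC divnMDl // divn_small // addn0.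
rewrite big_ord_recl dw_top !dv // dk0 digit0n natrD Zp_nat_mod // -natrD -addnA.
congr ((_ + (_ + _))%:R); apply: eq_bigr => i _.
by rewrite lift0 dkS dw // dv // !ltnS ltnW.
Qed.

Section Tau.
Variable s : nat.
Hypothesis s_gt1 : (1 < s)%N.

Let ltn_addMX_s {a j} : (a < p)%N -> (j < p ^ (s - 1 - 1))%N -> (a + p * j < p ^ (s - 1))%N.
Proof. by move=> lt_a lt_j; rewrite (_ : s - 1 = (s - 1 - 1).+1)%N ?ltn_addMX //; lia. Qed.

Lemma entry_gamma_Phi (v : 'rV['Z_(p ^ (s - 1))]_p) a j :
  (a < p)%N -> (j < p ^ (s - 1 - 1))%N ->
  entry (gamma p s (Phi p (s - 1) p v)) (a + p * j) = entry (phi p (s - 1) (entry v a)) j.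
Proof.
move=> lt_a lt_j; have lt_k := ltn_addMX_s lt_a lt_j.
have lt_l : (a * p ^ (s - 1 - 1) + j < p * p ^ (s - 1 - 1))%N.
  apply: (leq_trans (n := a.+1 * p ^ (s - 1 - 1))).
    by rewrite mulSn addnC ltn_add2r.
  by rewrite leq_mul2r lt_a orbT.
rewrite (entryE (gamma p s _) lt_k) mxE /=.
have -> : ((a + p * j) %% p * p ^ (s - 2) + (a + p * j) %/ p = a * p ^ (s - 1 - 1) + j)%N.
  by rewrite -subnDA (addnC a) (mulnC p j) modnMDl divnMDl // modn_small // divn_small // addn0.
rewrite (entryE (Phi p (s - 1) p v) lt_l) mxE /=.
by rewrite (divnMDl _ _ (pX_gt0 _)) (divn_small lt_j) addn0 modnMDl (modn_small lt_j).
Qed.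

Lemma gamma_Phi_inj (v w : 'rV['Z_(p ^ (s - 1))]_p) :
  gamma p s (Phi p (s - 1) p v) = gamma p s (Phi p (s - 1) p w) -> v = w.
Proof.
move=> eq_vw; apply/rowP => a; rewrite -!entry_ord.
apply: phi_inj => [|j lt_j]; first by rewrite subn_gt0.
by rewrite -!(entry_gamma_Phi _ _ _ (ltn_ord a) lt_j) eq_vw.
Qed.

Definition tau_nat n : 'rV['Z_(p ^ (s - 1))]_p :=
  \row_(a < p) (n %/ p + n %% p * a * p ^ (s - 2))%N%:R.

Lemma entry_phi_tau_nat n a j : (a < p)%N -> (j < p ^ (s - 1 - 1))%N ->
  entry (phi p (s - 1) (entry (tau_nat n) a)) j = entry (phi p s n%:R) (a + p * j).
Proof.
move=> lt_a lt_j; have lt_k := ltn_addMX_s lt_a lt_j.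
rewrite (entryE (tau_nat n) lt_a) mxE (entry_phi _ _ _ lt_j) (entry_phi _ _ _ lt_k).
have s_gt0 : (0 < s)%N by apply: ltnW.
have s1_gt0 : (0 < s - 1)%N by rewrite subn_gt0.
rewrite (val_Zp_nat (pX_gt1 s_gt0)) (val_Zp_nat (pX_gt1 s1_gt0)).
have [r ->] : exists r, s = r.+2 by exists (s - 2)%N; lia.
by rewrite !subn1 subn2 /=; apply: entry_formula_shift.
Qed.

Lemma gamma_Phi_tau_nat n : gamma p s (Phi p (s - 1) p (tau_nat n)) = phi p s n%:R.
Proof.
apply/rowP => k; rewrite -!entry_ord.
have lt_a : (k %% p < p)%N by rewrite ltn_pmod.
have lt_j : (k %/ p < p ^ (s - 1 - 1))%N.
  by rewrite ltn_divLR // -expnSr (_ : (s - 1 - 1).+1 = s - 1)%N ?ltn_ord //; lia.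
by rewrite (divn_eq k p) addnC mulnC entry_gamma_Phi // entry_phi_tau_nat.
Qed.

Lemma tau_natrE n : tau p s n%:R = tau_nat n.
Proof.
rewrite /tau; case: pickP => [v /eqP eq_v | no_v]; last first.
  by have := no_v (tau_nat n); rewrite gamma_Phi_tau_nat eqxx.
by apply: gamma_Phi_inj; rewrite eq_v gamma_Phi_tau_nat.
Qed.

Lemma tau_nat0 : tau_nat 0 = 0.
Proof. by apply/rowP => a; rewrite !mxE div0n mod0n. Qed.

Lemma tau_natD_dvd m n : (p %| n)%N -> tau_nat (m + n) = tau_nat m + tau_nat n.
Proof.
case/dvdnP => q ->; apply/rowP => a; rewrite !mxE (addnC m) divnMDl // modnMDl.
by rewrite mulnK // modnMl !mul0n addn0 -natrD [in RHS]addnC addnA.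
Qed.

Lemma tau_nat_sum I (r : seq I) (P : pred I) F : (forall i, P i -> p %| F i)%N ->
  tau_nat (\sum_(i <- r | P i) F i) = \sum_(i <- r | P i) tau_nat (F i).
Proof.
move=> dvd_F; elim/big_rec2: _ => [|i m y P_i <-]; first exact: tau_nat0.
by rewrite addnC tau_natD_dvd ?dvd_F // addrC.
Qed.

End Tau.

End PhiGamma.

Theorem proposition1 (p s : nat) (lam : 'I_s -> 'I_p) :
  prime p -> (2 <= s)%N ->
  phi p s (\sum_(i < s) ((lam i : nat) * p ^ i)%:R) =
  gamma p s (Phi p (s - 1) p
    (\sum_(i < s) tau p s (((lam i : nat) * p ^ i)%:R))).
Proof.
move=> p_prime s_gt1; have p_gt1 := prime_gt1 p_prime.
rewrite -natr_sum -(gamma_Phi_tau_nat _ p_gt1 _ s_gt1).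
under [in RHS]eq_bigr do rewrite (tau_natrE _ p_gt1 _ s_gt1).
congr (gamma _ _ (Phi _ _ _ _)); case: s lam s_gt1 => // s lam s_gt1.
have dvd_p (i : 'I_s) : (p %| lam (lift ord0 i) * p ^ lift ord0 i)%N.
  by rewrite lift0 expnS dvdn_mull // dvdn_mulr.
by rewrite !big_ord_recl tau_natD_dvd ?tau_nat_sum ?dvdn_sum.
Qed.
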